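(* Let $\alpha$ be an expanding algebraic number with primitive minimal polynomial $A(X)=a_nX^n+\dots+a_1X+a_0\in\mathbb{Z}[X]$. The $\mathbb{Z}$-module $\Lambda_{\alpha,0}=\mathbb{Z}[\alpha]\cap\alpha^{-1}\mathbb{Z}[\alpha^{-1}]$ is generated by $w_0=a_n$ and $w_i=\alpha w_{i-1}+a_{n-i}$ for $1\le i<n$.
   Context: Expanding: all roots of $A$ have modulus $>1$; primitive: the coefficients of $A$ have gcd 1. *)

From HB Require Import structures.
From mathcomp Require Import all_boot all_order all_algebra all_field.
Set Implicit Arguments. Unset Strict Implicit. Unset Printing Implicit Defensive.
Import Order.TTheory GRing.Theory Num.Theory.
Local Open Scope ring_scope.

Definition primitive_intpoly (A : {poly int}) : bool :=
  \big[gcdn/0%N]_(i < size A) absz (A`_i) == 1%N.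

Definition zeval (p : {poly int}) (x : algC) : algC := (map_poly intr p).[x].

Definition in_Zring (x y : algC) : Prop :=
  exists p : {poly int}, y = zeval p x.

Definition in_ZinvRing (x y : algC) : Prop :=
  exists p : {poly int}, y = x^-1 * zeval p x^-1.

Definition expanding (A : {poly int}) : Prop :=
  forall z : algC, root (map_poly intr A) z -> 1 < `|z|.

Fixpoint wgen (A : {poly int}) (x : algC) (i : nat) : algC :=
  match i with
  | 0%N => (lead_coef A)%:~R
  | j.+1 => x * wgen A x j + (A`_((size A).-1 - j.+1))%:~R
  end.

From HB Require Import structures.
From mathcomp Require Import all_boot all_order all_algebra all_field.
From mathcomp Require Import zify.
Import Order.TTheory GRing.Theory Num.Theory.
Local Open Scope ring_scope.

(* The generator [w_i] is the value at [alpha] of the tail [a_n X^i + ... + a_(n-i)]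
   of [A], hence lies in [Z[alpha]]; since [A(alpha) = 0] it also equals
   [-alpha^(i-n)] times the head [a_0 + ... + a_(n-i-1) X^(n-i-1)] at [alpha], hence
   lies in [alpha^-1 Z[alpha^-1]].  Conversely, if [y = P(alpha) = alpha^-1 Q(alpha^-1)]
   and [m = size Q], then [F = P X^m - X^(m-1) Q(1/X)] is an integer polynomial
   vanishing at [alpha].  Irreducibility and Gauss's lemma (for primitive [A]) give
   [F = A G] with [G] integral, and [P], the quotient of [F] by [X^m], is then an
   integer combination of tails of [A]. *)

Section DropPoly.
Variable R : nzRingType.
Implicit Types p : {poly R}.

Lemma drop_poly_lead p : drop_poly (size p).-1 p = (lead_coef p)%:P.
Proof.
apply/polyP => j; rewrite coef_drop_poly coefC lead_coefE.
case: j => [|j] //=; rewrite nth_default //.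
by case: (size p) => [|s] //=; rewrite addSn ltnS leq_addl.
Qed.

Lemma drop_polyS k p : drop_poly k p = drop_poly k.+1 p * 'X + (p`_k)%:P.
Proof.
apply/polyP => j; rewrite coefD coefMX coefC !coef_drop_poly.
by case: j => [|j] /=; rewrite ?add0r ?addr0 ?addSnnS.
Qed.

End DropPoly.

Section IrreducibleDvdp.
Variables (K L : fieldType) (f : {rmorphism K -> L}).

Lemma irreducible_root_dvdp (p q : {poly K}) (x : L) : irreducible_poly p ->
  root (map_poly f p) x -> root (map_poly f q) x -> p %| q.
Proof.
move=> [size_p p_irr] px qx; set g := gcdp p q.
have p0 : p != 0 by rewrite -size_poly_gt0 (ltn_trans _ size_p).
have gx : root (map_poly f g) x by rewrite gcdp_map root_gcd px.
have size_g : size g != 1%N.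
  have g0 : map_poly f g != 0 by rewrite map_poly_eq0 gcdp_eq0 negb_and p0.
  by rewrite -(size_map_poly f) gtn_eqF ?(root_size_gt1 g0 gx).
by rewrite -(eqp_dvdl _ (p_irr g size_g (dvdp_gcdl p q))) dvdp_gcdr.
Qed.

End IrreducibleDvdp.

Section Zeval.
Variable x : algC.
Implicit Types p q : {poly int}.

Lemma zevalC c : zeval c%:P x = c%:~R.
Proof. by rewrite /zeval map_polyC hornerC. Qed.

Lemma zevalX : zeval 'X x = x.
Proof. by rewrite /zeval map_polyX hornerX. Qed.

Lemma zevalXn k : zeval 'X^k x = x ^+ k.
Proof. by rewrite /zeval map_polyXn hornerXn. Qed.

Lemma zevalD p q : zeval (p + q) x = zeval p x + zeval q x.
Proof. by rewrite /zeval rmorphD hornerD. Qed.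

Lemma zevalN p : zeval (- p) x = - zeval p x.
Proof. by rewrite /zeval rmorphN hornerN. Qed.

Lemma zevalM p q : zeval (p * q) x = zeval p x * zeval q x.
Proof. by rewrite /zeval rmorphM hornerM. Qed.

Lemma zevalZ c p : zeval (c *: p) x = c%:~R * zeval p x.
Proof. by rewrite /zeval map_polyZ hornerZ. Qed.

Lemma zeval_sum (I : finType) (F : I -> {poly int}) :
  zeval (\sum_i F i) x = \sum_i zeval (F i) x.
Proof. by rewrite /zeval rmorph_sum horner_sum. Qed.

Lemma zeval_wide {j p} : (size p <= j)%N ->
  zeval p x = \sum_(i < j) (p`_i)%:~R * x ^+ i.
Proof.
move=> size_p; rewrite /zeval (horner_coef_wide _ (_ : _ <= j)%N).
  by apply: eq_bigr => i _; rewrite coef_map.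
by rewrite size_map_inj_poly //; apply: intr_inj.
Qed.

End Zeval.

(* [revp j q] is [X^(j-1) q(1/X)] provided [size q <= j]. *)
Definition revp (j : nat) (q : {poly int}) : {poly int} :=
  \poly_(k < j) q`_(j.-1 - k).

Lemma zeval_revp (x : algC) j (q : {poly int}) : x != 0 -> (size q <= j)%N ->
  x^-1 * zeval (revp j q) x^-1 = x ^- j * zeval q x.
Proof.
move=> x0 size_q; rewrite (zeval_wide _ (size_poly j _)) (zeval_wide x size_q).
rewrite !mulr_sumr (reindex_inj rev_ord_inj) /=; apply: eq_bigr => k _.
have k_lt := ltn_ord k.
rewrite coef_poly (_ : j - k.+1 < j)%N; last lia.
have -> : (j.-1 - (j - k.+1) = k)%N by lia.
have -> : x ^- j = x^-1 ^+ (j - k.+1).+1 * x^-1 ^+ k.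
  by rewrite -exprD -exprVn; congr (_ ^+ _); lia.
rewrite exprS -!mulrA; congr (_ * _); rewrite mulrC; congr (_ * _).
by rewrite mulrCA exprVn mulVf ?mulr1 // expf_neq0.
Qed.

Lemma primitive_dvdp_int (A F : {poly int}) : A != 0 -> primitive_intpoly A ->
  (map_poly intr A : {poly rat}) %| map_poly intr F -> exists G, F = A * G.
Proof.
move=> A0 A_prim; rewrite dvdp_rat_int => /dvdpP_int[G ->].
have sgA2 : sgz (lead_coef A) ^+ 2 = 1.
  by rewrite -sgzX gtr0_sgz // exprn_even_gt0 //= lead_coef_eq0.
have -> : zprimitive A = sgz (lead_coef A) *: A.
  by rewrite {3}(zpolyEprim A) /zcontents (eqP A_prim) mulr1 scalerA -expr2 sgA2 scale1r.
by exists (sgz (lead_coef A) *: G); rewrite -scalerAl scalerAr.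
Qed.

Lemma map_ratr_intr (R : numFieldType) (p : {poly int}) :
  map_poly (ratr : rat -> R) (map_poly intr p) = map_poly intr p.
Proof. by rewrite -map_poly_comp; apply: eq_map_poly => c /=; rewrite ratr_int. Qed.

Section Wgen.
Variables (A : {poly int}) (x : algC).
Local Notation n := (size A).-1.

Lemma wgen_drop i : (i <= n)%N -> wgen A x i = zeval (drop_poly (n - i) A) x.
Proof.
elim: i => [|i IHi] lt_i /=; first by rewrite subn0 drop_poly_lead zevalC.
rewrite IHi ?(ltnW lt_i) // (drop_polyS _ (n - i.+1)%N) subnSK //.
by rewrite zevalD zevalM zevalC zevalX mulrC.
Qed.

Hypothesis A_x : root (map_poly intr A) x.
Let zeval_A : zeval A x = 0. Proof. exact/rootP. Qed.

(* [A(x) = 0] splits as [take_j A (x) + x^j drop_j A (x) = 0]. *)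
Lemma wgen_revp i : x != 0 -> (i <= n)%N ->
  wgen A x i = - x^-1 * zeval (revp (n - i) (take_poly (n - i) A)) x^-1.
Proof.
move=> x0 le_i; set j := (n - i)%N.
have := congr1 (zeval^~ x) (poly_take_drop j A).
rewrite /= zevalD zevalM zevalXn zeval_A => /eqP; rewrite addr_eq0 => /eqP take_eq.
rewrite mulNr zeval_revp ?size_take_poly // wgen_drop // take_eq.
by rewrite mulrN opprK mulrC mulfK // expf_neq0.
Qed.

Definition wspan (y : algC) : Prop :=
  exists c : 'I_n -> int, y = \sum_i (c i)%:~R * wgen A x i.

Lemma wspan0 : wspan 0.
Proof. by exists (fun=> 0); rewrite big1 // => i _; rewrite mul0r. Qed.

Lemma wspanD y z : wspan y -> wspan z -> wspan (y + z).
Proof.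
move=> [c ->] [d ->]; exists (fun i => c i + d i).
by rewrite -big_split; apply: eq_bigr => i _; rewrite rmorphD mulrDl.
Qed.

Lemma wspanZ (a : int) y : wspan y -> wspan (a%:~R * y).
Proof.
move=> [c ->]; exists (fun i => a * c i).
by rewrite mulr_sumr; apply: eq_bigr => i _; rewrite rmorphM mulrA.
Qed.

Lemma wspan_wgen i : (i < n)%N -> wspan (wgen A x i).
Proof.
move=> lt_i; exists (fun j => (j == Ordinal lt_i)%:R).
rewrite (bigD1 (Ordinal lt_i)) //= eqxx mul1r big1 ?addr0 // => j /negPf->.
by rewrite mul0r.
Qed.

(* [drop_poly m (A * 'X^k)] is a multiple of [A], a tail of [A] or [0]. *)
Lemma wspan_drop_mulXn m k : wspan (zeval (drop_poly m (A * 'X^k)) x).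
Proof.
rewrite drop_polyMXn zevalM zevalXn.
have [le_mk | lt_km] := leqP m k.
  have -> : (m - k = 0)%N by lia.
  by rewrite drop_poly0l zeval_A mul0r; exact: wspan0.
have -> : (k - m = 0)%N by lia.
rewrite expr0 mulr1.
have [le_n | lt_n] := leqP (m - k) n; last first.
  rewrite drop_poly_eq0; last lia.
  by rewrite /zeval map_poly0 horner0; exact: wspan0.
have lt_i : (n - (m - k) < n)%N by lia.
by rewrite -(subKn le_n) -wgen_drop ?leq_subr //; exact: wspan_wgen.
Qed.

Lemma wspan_drop_mul m G : wspan (zeval (drop_poly m (A * G)) x).
Proof.
rewrite -[G]coefK poly_def mulr_sumr drop_poly_sum zeval_sum.
apply: (big_ind wspan); [exact: wspan0 | exact: wspanD | move=> k _].
by rewrite -scalerAr drop_polyZ zevalZ; apply/wspanZ/wspan_drop_mulXn.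
Qed.

Lemma Zring_of_wspan y : wspan y -> in_Zring x y.
Proof.
move=> [c ->]; exists (\sum_(i < n) c i *: drop_poly (n - i) A).
rewrite zeval_sum; apply: eq_bigr => i _.
by rewrite zevalZ wgen_drop // ltnW.
Qed.

Lemma ZinvRing_of_wspan y : x != 0 -> wspan y -> in_ZinvRing x y.
Proof.
move=> x0 [c ->]; exists (\sum_(i < n) c i *: - revp (n - i) (take_poly (n - i) A)).
rewrite zeval_sum mulr_sumr; apply: eq_bigr => i _.
by rewrite zevalZ zevalN mulrCA mulrN -mulNr -wgen_revp // ltnW.
Qed.

Lemma wspan_of_Zring_ZinvRing y :
  irreducible_poly (map_poly intr A : {poly rat}) -> primitive_intpoly A ->
  x != 0 -> in_Zring x y -> in_ZinvRing x y -> wspan y.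
Proof.
move=> A_irr A_prim x0 [P ->{y}] [Q yQ]; set m := size Q.
have revpQ : zeval (revp m Q) x = x ^+ m * zeval P x.
  have := @zeval_revp x^-1 m Q (invr_neq0 x0) (leqnn m).
  rewrite invrK exprVn invrK (_ : zeval Q x^-1 = x * zeval P x); last first.
    by rewrite yQ mulVKf.
  by rewrite mulrCA => /(mulfI x0).
have A0 : A != 0.
  by case: A_irr => + _; rewrite size_rat_int_poly -size_poly_gt0 => /ltnW.
(* [P * 'X^m - revp m Q] vanishes at [x], and [P] is its quotient by ['X^m]. *)
have -> : P = drop_poly m (P * 'X^m - revp m Q).
  by rewrite addrC drop_polyDMXn // size_polyN size_poly.
have [G ->] : exists G, P * 'X^m - revp m Q = A * G.
  apply: primitive_dvdp_int => //.
  apply: (@irreducible_root_dvdp _ _ ratr _ _ x A_irr).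
    by rewrite map_ratr_intr.
  rewrite map_ratr_intr; apply/rootP.
  by rewrite -/(zeval _ x) zevalD zevalN zevalM zevalXn revpQ mulrC subrr.
exact: wspan_drop_mul.
Qed.

End Wgen.

Theorem lemma6p14 (alpha : algC) (A : {poly int}) :
  irreducible_poly (map_poly intr A : {poly rat}) ->
  root (map_poly intr A : {poly algC}) alpha ->
  primitive_intpoly A ->
  expanding A ->
  forall y : algC,
    in_Zring alpha y /\ in_ZinvRing alpha y <->
    exists c : 'I_(size A).-1 -> int,
      y = \sum_(i < (size A).-1) (c i)%:~R * wgen A alpha i.
Proof.
move=> A_irr A_alpha A_prim A_exp y.
(* Expansion is only needed to rule out [alpha = 0]. *)
have alpha0 : alpha != 0.
  by have := A_exp _ A_alpha; apply: contraTneq => ->; rewrite normr0 ltr10.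
split=> [[Zy Zinv_y] | Wy]; first exact: wspan_of_Zring_ZinvRing.
by split; [exact: (Zring_of_wspan A) | exact: (ZinvRing_of_wspan A)].
Qed.
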